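(* Let $\alpha\ge0$, $0\le\beta<1$, and $f=h+\overline{g}\in\mathcal{W}_{\mathcal{H}}^0(\alpha,\beta)$. Then $s_{2,2}(f)(z)=z+a_2z^2+\overline{b_2z^2}$ is a convex harmonic mapping in the disk $|z|<\dfrac{1+\alpha}{4(1-\beta)}$.
   Context: Let $\mathbb{D}=\{z\in\mathbb{C}:|z|<1\}$. $\mathcal{H}^0$ denotes the class of harmonic maps $f=h+\overline{g}$ on $\mathbb{D}$, with $h,g$ analytic in $\mathbb{D}$, $h(z)=z+\sum_{n\ge2}a_nz^n$ and $g(z)=\sum_{n\ge2}b_nz^n$. For $\alpha\ge0$, $0\le\beta<1$, $\mathcal{W}_{\mathcal{H}}^0(\alpha,\beta)$ denotes the class of $f=h+\overline{g}\in\mathcal{H}^0$ such that $\Re\big(h'(z)+\alpha zh''(z)-\beta\big)>|g'(z)+\alpha zg''(z)|$ for all $z\in\mathbb{D}$. A harmonic map is convex in a disk if it is univalent there and maps the disk onto a convex domain. *)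

From Stdlib Require Import Reals.
Open Scope R_scope.

Definition Cx : Type := (R * R)%type.
Definition Cre (z : Cx) : R := fst z.
Definition Cim (z : Cx) : R := snd z.
Definition RtoC (x : R) : Cx := (x, 0).
Definition Cadd (z w : Cx) : Cx := (fst z + fst w, snd z + snd w).
Definition Copp (z : Cx) : Cx := (- fst z, - snd z).
Definition Csub (z w : Cx) : Cx := Cadd z (Copp w).
Definition Cmul (z w : Cx) : Cx :=
  (fst z * fst w - snd z * snd w, fst z * snd w + snd z * fst w).
Definition Cconj (z : Cx) : Cx := (fst z, - snd z).
Definition Cnorm (z : Cx) : R := sqrt (fst z * fst z + snd z * snd z).
Definition Cinv (z : Cx) : Cx :=
  let d := fst z * fst z + snd z * snd z in (fst z / d, - snd z / d).
Definition Cdiv (z w : Cx) : Cx := Cmul z (Cinv w).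
Fixpoint Cpow (z : Cx) (n : nat) : Cx :=
  match n with O => RtoC 1 | S m => Cmul z (Cpow z m) end.

Definition Cseries_sum (u : nat -> Cx) (l : Cx) : Prop :=
  Un_cv (fun N => sum_f_R0 (fun n => fst (u n)) N) (fst l) /\
  Un_cv (fun N => sum_f_R0 (fun n => snd (u n)) N) (snd l).

Definition Cderiv (f : Cx -> Cx) (z l : Cx) : Prop :=
  forall eps : R, 0 < eps -> exists delta : R, 0 < delta /\
    forall w : Cx, 0 < Cnorm w < delta ->
      Cnorm (Csub (Cdiv (Csub (f (Cadd z w)) (f z)) w) l) < eps.

Definition inD (z : Cx) : Prop := Cnorm z < 1.

(* f = h + conj g in H^0, with h(z) = sum a_n z^n, g(z) = sum b_n z^n on D,
   a_0 = 0, a_1 = 1, b_0 = b_1 = 0 *)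
Definition in_H0 (a b : nat -> Cx) (h g : Cx -> Cx) : Prop :=
  a 0%nat = RtoC 0 /\ a 1%nat = RtoC 1 /\ b 0%nat = RtoC 0 /\ b 1%nat = RtoC 0 /\
  (forall z, inD z -> Cseries_sum (fun n => Cmul (a n) (Cpow z n)) (h z)) /\
  (forall z, inD z -> Cseries_sum (fun n => Cmul (b n) (Cpow z n)) (g z)).

Definition in_W (alpha beta : R) (a b : nat -> Cx) (h g : Cx -> Cx) : Prop :=
  in_H0 a b h g /\
  exists h1 h2 g1 g2 : Cx -> Cx,
    (forall z, inD z -> Cderiv h z (h1 z)) /\
    (forall z, inD z -> Cderiv h1 z (h2 z)) /\
    (forall z, inD z -> Cderiv g z (g1 z)) /\
    (forall z, inD z -> Cderiv g1 z (g2 z)) /\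
    (forall z, inD z ->
       Cre (Cadd (h1 z) (Cmul (RtoC alpha) (Cmul z (h2 z)))) - beta >
       Cnorm (Cadd (g1 z) (Cmul (RtoC alpha) (Cmul z (g2 z))))).

Definition s22 (a b : nat -> Cx) (z : Cx) : Cx :=
  Cadd (Cadd z (Cmul (a 2%nat) (Cpow z 2)))
       (Cconj (Cmul (b 2%nat) (Cpow z 2))).

Definition univalent_in_disk (F : Cx -> Cx) (r : R) : Prop :=
  forall z1 z2, Cnorm z1 < r -> Cnorm z2 < r -> F z1 = F z2 -> z1 = z2.

Definition convex_set (S : Cx -> Prop) : Prop :=
  forall w1 w2 t, S w1 -> S w2 -> 0 <= t <= 1 ->
    S (Cadd (Cmul (RtoC t) w1) (Cmul (RtoC (1 - t)) w2)).

Definition convex_in_disk (F : Cx -> Cx) (r : R) : Prop :=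
  univalent_in_disk F r /\
  convex_set (fun w => exists z, Cnorm z < r /\ F z = w).

(* Write [s22 a b] as [G z = z + A z^2 + conj (B z^2)] with [A = a_2], [B = b_2].

   Coefficients: for [|e| = 1] the function
   [(h' + alpha z h'' - beta + e (g' + alpha z g'')) / (1 - beta)] has nonnegative real part
   and constant term [1], so by Carathéodory its coefficient of [z],
   [2 (1 + alpha) (a_2 + e b_2) / (1 - beta)], has modulus at most [2]; aligning [e b_2] with
   [a_2] gives [(1 + alpha) (|a_2| + |b_2|) <= 1 - beta].  Carathéodory's inequality is
   obtained without integration, by averaging [Re p] over the [N]-th roots of unity against
   the weight [1 + Re (m w)].

   Geometry: if [4 r (|A| + |B|) <= 1] then [G] is injective on [|z| < r], and for
   [|v| < |u| < r] the point [G v] lies strictly on the inner side of the tangent line to the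
   image of the circle [|z| = |u|] at [G u].  Following the segment between two image points
   by local inversion of [G] (a contraction argument), preimages can never leave the disk of
   radius [max (|z1|, |z2|)], so the whole segment lies in the image. *)

From Coquelicot Require Import Coquelicot.
From Stdlib Require Import Reals Lra Lia Psatz.
Open Scope R_scope.

(** * The complex norm *)

Lemma Cx_ext (x y : Cx) : fst x = fst y -> snd x = snd y -> x = y.
Proof. destruct x, y; simpl; intros; subst; reflexivity. Qed.

Lemma Cnorm_Cmod (z : Cx) : Cnorm z = Cmod z.
Proof. unfold Cnorm, Cmod. f_equal. simpl. ring. Qed.

Lemma Cnorm_ge0 (x : Cx) : 0 <= Cnorm x.
Proof. apply sqrt_pos. Qed.

Lemma Cnorm_mul (x y : Cx) : Cnorm (Cmul x y) = Cnorm x * Cnorm y.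
Proof. rewrite !Cnorm_Cmod. exact (Cmod_mult x y). Qed.

Lemma Cnorm_triang (x y : Cx) : Cnorm (Cadd x y) <= Cnorm x + Cnorm y.
Proof. rewrite !Cnorm_Cmod. exact (Cmod_triangle x y). Qed.

Lemma Cnorm_conj (x : Cx) : Cnorm (Cconj x) = Cnorm x.
Proof. unfold Cnorm, Cconj; simpl. f_equal. ring. Qed.

Lemma Cnorm_opp (x : Cx) : Cnorm (Copp x) = Cnorm x.
Proof. unfold Cnorm, Copp; simpl. f_equal. ring. Qed.

Lemma Cnorm_RtoC (t : R) : Cnorm (RtoC t) = Rabs t.
Proof. rewrite Cnorm_Cmod. exact (Cmod_R t). Qed.

Lemma Cnorm_sqr (x : Cx) : Cnorm x * Cnorm x = fst x * fst x + snd x * snd x.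
Proof. unfold Cnorm. apply sqrt_sqrt. nra. Qed.

Lemma Cnorm_eq0 (x : Cx) : Cnorm x = 0 -> x = (0, 0).
Proof. rewrite Cnorm_Cmod. exact (Cmod_eq_0 x). Qed.

Lemma Cnorm_gt0_neq0 (u : Cx) : 0 < Cnorm u -> u <> (0, 0).
Proof.
  intros H E. rewrite E in H. unfold Cnorm in H. simpl in H.
  rewrite Rmult_0_l, Rplus_0_l, sqrt_0 in H. lra.
Qed.

Lemma Rabs_fst_le_Cnorm (x : Cx) : Rabs (fst x) <= Cnorm x.
Proof. rewrite Cnorm_Cmod. exact (re_le_Cmod x). Qed.

Lemma Rabs_snd_le_Cnorm (x : Cx) : Rabs (snd x) <= Cnorm x.
Proof.
  assert (H := Rabs_fst_le_Cnorm (snd x, fst x)).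
  unfold Cnorm in *; simpl in *. rewrite Rplus_comm in H. exact H.
Qed.

Lemma fst_ge_neg_Cnorm (x : Cx) : - Cnorm x <= fst x.
Proof. exact (proj1 (proj1 (Rabs_le_between _ _) (Rabs_fst_le_Cnorm x))). Qed.

Lemma fst_le_Cnorm (x : Cx) : fst x <= Cnorm x.
Proof. exact (proj2 (proj1 (Rabs_le_between _ _) (Rabs_fst_le_Cnorm x))). Qed.

Lemma Cnorm_sub_le (x y : Cx) : Cnorm (Csub x y) <= Cnorm x + Cnorm y.
Proof. unfold Csub. rewrite <- (Cnorm_opp y). apply Cnorm_triang. Qed.

Lemma Cnorm_sub_sym (x y : Cx) : Cnorm (Csub x y) = Cnorm (Csub y x).
Proof. unfold Cnorm, Csub, Cadd, Copp; simpl. f_equal. ring. Qed.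

Lemma Cx_eq_of_Cnorm_sub_le0 (x y : Cx) : Cnorm (Csub x y) <= 0 -> x = y.
Proof.
  intro H. assert (E := Cnorm_eq0 _ (Rle_antisym _ _ H (Cnorm_ge0 _))).
  replace x with (Cadd (Csub x y) y) by (apply Cx_ext; simpl; ring).
  rewrite E. apply Cx_ext; simpl; ring.
Qed.

Lemma Cnorm_dist_triang (x y z : Cx) :
  Cnorm (Csub x z) <= Cnorm (Csub x y) + Cnorm (Csub y z).
Proof.
  replace (Csub x z) with (Cadd (Csub x y) (Csub y z)) by (apply Cx_ext; simpl; ring).
  apply Cnorm_triang.
Qed.

Lemma Cnorm_triang_rev (x y : Cx) : Cnorm x - Cnorm y <= Cnorm (Cadd x y).
Proof.
  assert (H := Cnorm_triang (Cadd x y) (Copp y)). rewrite Cnorm_opp in H.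
  replace (Cadd (Cadd x y) (Copp y)) with x in H by (apply Cx_ext; simpl; ring). lra.
Qed.

Lemma Cnorm_div (x u : Cx) : u <> (0, 0) -> Cnorm (Cdiv x u) = Cnorm x / Cnorm u.
Proof.
  intro H. unfold Cdiv, Rdiv. rewrite Cnorm_mul, !Cnorm_Cmod, <- (Cmod_inv u H).
  do 2 f_equal. unfold Cinv, Complex.Cinv. simpl. f_equal; f_equal; ring.
Qed.

Lemma sqrt_le_of_le_sqr (a b : R) : 0 <= b -> a <= b * b -> sqrt a <= b.
Proof.
  intros Hb H. destruct (Rle_or_lt a 0).
  - rewrite sqrt_neg_0; auto.
  - rewrite <- (sqrt_square b Hb). apply sqrt_le_1_alt. auto.
Qed.

Lemma Cnorm_le_Rabs_sum (z : Cx) : Cnorm z <= Rabs (fst z) + Rabs (snd z).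
Proof.
  assert (H1 := Rabs_pos (fst z)). assert (H2 := Rabs_pos (snd z)).
  assert (E1 : Rabs (fst z) * Rabs (fst z) = fst z * fst z)
    by (rewrite <- Rabs_mult; apply Rabs_pos_eq; nra).
  assert (E2 : Rabs (snd z) * Rabs (snd z) = snd z * snd z)
    by (rewrite <- Rabs_mult; apply Rabs_pos_eq; nra).
  apply sqrt_le_of_le_sqr; nra.
Qed.

(** * The quadratic harmonic map *)

Definition quad_map (A B z : Cx) : Cx :=
  Cadd (Cadd z (Cmul A (Cpow z 2))) (Cconj (Cmul B (Cpow z 2))).

(* [z h'(z) - conj (z g'(z))] for [h = z + A z^2], [g = B z^2]: the outward normal, at
   [quad_map A B u], of the image of the circle [|z| = |u|]. *)
Definition quad_normal (A B u : Cx) : Cx :=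
  Csub (Cmul u (Cadd (RtoC 1) (Cmul (RtoC 2) (Cmul A u))))
       (Cconj (Cmul (RtoC 2) (Cmul B (Cmul u u)))).

(* [Re (conj (quad_normal A B u) (quad_map A B u - quad_map A B v))] after dividing by
   [|u|^2], in the rescaled variables [A u], [conj (B u^2) / u] and [c = v / u]. *)
Definition support_form (A B c : Cx) : R :=
  let D := Csub (RtoC 1) c in let S := Cadd (RtoC 1) c in
  fst (Cmul (Cconj (Csub (Cadd (RtoC 1) (Cmul (RtoC 2) A)) (Cmul (RtoC 2) B)))
        (Cadd (Cadd D (Cmul A (Cmul D S))) (Cmul B (Cconj (Cmul D S))))).

Lemma quad_support_scaling (A B u v : Cx) : u <> (0, 0) ->
  fst (Cmul (Cconj (quad_normal A B u)) (Csub (quad_map A B u) (quad_map A B v))) =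
  (fst u * fst u + snd u * snd u) *
  support_form (Cmul A u) (Cdiv (Cconj (Cmul B (Cmul u u))) u) (Cdiv v u).
Proof.
  intro Hu. assert (H : fst u * fst u + snd u * snd u <> 0).
  { intro H. apply Hu. destruct u as [x y]; simpl in *.
    assert (x = 0) by nra. assert (y = 0) by nra. subst; auto. }
  destruct u as [u1 u2], v as [v1 v2], A as [a1 a2], B as [b1 b2].
  unfold support_form, quad_normal, quad_map, Cdiv, Cinv, Cmul, Cconj, Csub, Cadd, Copp,
    RtoC, Cpow; simpl in *.
  field. auto.
Qed.

Lemma Cnorm_four_re_sub_sqr_le (c : Cx) : Cnorm c < 1 ->
  Cnorm (Csub (RtoC (4 * (1 - fst c))) (Cmul (Csub (RtoC 1) c) (Csub (RtoC 1) c))) <=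
  4 * (1 - fst c) + fst (Csub (RtoC 1) (Cmul c c)) / 2.
Proof.
  intro Hc. destruct c as [x y].
  assert (Hxy : x * x + y * y < 1).
  { assert (H := Cnorm_sqr (x, y)). assert (H0 := Cnorm_ge0 (x, y)). simpl in H. nra. }
  unfold Cnorm; simpl. set (s := 1 - x).
  replace (1 + - (x * x - y * y)) with (s * (2 - s) + y * y) by (unfold s; ring).
  replace (1 + - x) with s by (unfold s; ring).
  apply sqrt_le_of_le_sqr; [unfold s; nra|].
  assert (Hs : 0 < s) by (unfold s; nra).
  assert (HY : y * y <= s * (2 - s)) by (unfold s; nra).
  assert (H1 : 0 <= (2*s - (s*s + y*y)) * (2*s + s*s + y*y)) by (apply Rmult_le_pos; nra).
  assert (H2 : 0 <= (4*s - (s*(2-s) + y*y)) * (12*s - (s*(2-s) + y*y)))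
    by (apply Rmult_le_pos; nra).
  nra.
Qed.

Lemma support_form_lower_bound (A B c : Cx) : Cnorm c < 1 -> Cnorm A + Cnorm B <= 1/4 ->
  (1 - fst c) * (1 - 4 * (Cnorm A + Cnorm B)) / 2 <= support_form A B c.
Proof.
  intros Hc HAB.
  set (D := Csub (RtoC 1) c).
  set (Z := Csub (RtoC (4 * (1 - fst c))) (Cmul D D)).
  set (s := 1 - fst c). set (P := fst (Csub (RtoC 1) (Cmul c c))).
  set (al := Cnorm A). set (be := Cnorm B).
  assert (HA2 := Cnorm_sqr A). assert (HB2 := Cnorm_sqr B). fold al in HA2. fold be in HB2.
  assert (Hal : 0 <= al) by apply Cnorm_ge0. assert (Hbe : 0 <= be) by apply Cnorm_ge0.
  assert (Hform : support_form A B c =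
    s + fst (Cmul A Z) - fst (Cmul (Cconj B) (Cmul D D)) + 2 * (al * al - be * be) * P).
  { rewrite HA2, HB2. unfold support_form, Z, D, s, P.
    destruct A as [a1 a2], B as [b1 b2], c as [x y]; simpl. ring. }
  assert (HZ : - (al * (4 * s + P / 2)) <= fst (Cmul A Z)).
  { assert (H := fst_ge_neg_Cnorm (Cmul A Z)). rewrite Cnorm_mul in H. fold al in H.
    assert (H1 : Cnorm Z <= 4 * s + P / 2) by exact (Cnorm_four_re_sub_sqr_le c Hc).
    assert (al * Cnorm Z <= al * (4 * s + P / 2)) by (apply Rmult_le_compat_l; auto). lra. }
  assert (Hxy : fst c * fst c + snd c * snd c < 1).
  { assert (H := Cnorm_sqr c). assert (H0 := Cnorm_ge0 c). nra. }
  assert (HDD : fst (Cmul (Cconj B) (Cmul D D)) <= be * (2 * s)).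
  { assert (H := fst_le_Cnorm (Cmul (Cconj B) (Cmul D D))).
    rewrite !Cnorm_mul, Cnorm_conj, Cnorm_sqr in H.
    assert (Hm : fst D * fst D + snd D * snd D <= 2 * s)
      by (unfold D, s; destruct c as [x y]; simpl in *; nra).
    assert (be * (fst D * fst D + snd D * snd D) <= be * (2 * s))
      by (apply Rmult_le_compat_l; auto). fold be in H. lra. }
  assert (Hs : 0 < s) by (unfold s; nra).
  assert (HP0 : 0 <= P) by (unfold P; destruct c as [x y]; simpl in *; nra).
  assert (HP4 : P <= 4 * s) by (unfold P, s; destruct c as [x y]; simpl in *; nra).
  fold al be in HAB.
  assert (be * be * P <= (1/4 - al) * (1/4 - al) * P).
  { apply Rmult_le_compat_r; auto. apply Rmult_le_compat; lra. }
  assert (0 <= (1/4 - al) * (4 * s - P)) by (apply Rmult_le_pos; lra).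
  rewrite Hform. fold s. nra.
Qed.

(* The image of the closed disk [|z| <= |v|], [|v| < |u|], lies strictly on the inner side
   of the tangent line at [quad_map A B u]. *)
Lemma quad_support_pos (A B u v : Cx) :
  Cnorm v < Cnorm u -> 4 * Cnorm u * (Cnorm A + Cnorm B) < 1 ->
  0 < fst (Cmul (Cconj (quad_normal A B u)) (Csub (quad_map A B u) (quad_map A B v))).
Proof.
  intros Hvu HK.
  assert (Hu0 : 0 < Cnorm u) by (assert (H := Cnorm_ge0 v); lra).
  assert (Hu : u <> (0, 0)) by (apply Cnorm_gt0_neq0; auto).
  rewrite quad_support_scaling by exact Hu.
  apply Rmult_lt_0_compat; [rewrite <- Cnorm_sqr; nra|].
  set (c := Cdiv v u).
  assert (Hc : Cnorm c < 1).
  { unfold c. rewrite Cnorm_div by exact Hu. apply Rlt_div_l; lra. }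
  assert (HAB : Cnorm (Cmul A u) + Cnorm (Cdiv (Cconj (Cmul B (Cmul u u))) u) < 1/4).
  { rewrite Cnorm_div, Cnorm_conj, !Cnorm_mul by exact Hu.
    replace (Cnorm B * (Cnorm u * Cnorm u) / Cnorm u) with (Cnorm B * Cnorm u) by (field; lra).
    lra. }
  assert (Hre : fst c < 1) by (assert (H := fst_le_Cnorm c); lra).
  eapply Rlt_le_trans; [|apply support_form_lower_bound; lra].
  apply Rmult_lt_0_compat; [apply Rmult_lt_0_compat|]; lra.
Qed.

(** * A contraction principle on closed disks *)

Lemma pow_le_pow_of_le1 (q : R) (N n : nat) : 0 <= q <= 1 -> (N <= n)%nat -> q ^ n <= q ^ N.
Proof.
  intros Hq H. replace n with (N + (n - N))%nat by lia. induction (n - N)%nat as [|k IH].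
  - rewrite Nat.add_0_r. lra.
  - rewrite Nat.add_succ_r. simpl. assert (0 <= q ^ (N + k)) by (apply pow_le; lra). nra.
Qed.

Lemma le0_of_le_geometric (x c : R) : (forall n, x <= c * (1/2) ^ n) -> x <= 0.
Proof.
  intro H. destruct (Rle_or_lt x 0) as [|Hx]; auto. exfalso.
  assert (Hc : 0 < c) by (specialize (H 0%nat); simpl in H; lra).
  destruct (pow_lt_1_zero (1/2) ltac:(rewrite Rabs_right; lra) (x / c)) as [N HN];
    [apply Rdiv_lt_0_compat; lra|].
  specialize (HN N (le_n N)). specialize (H N).
  rewrite Rabs_right in HN by (apply Rle_ge, pow_le; lra).
  apply (Rmult_lt_compat_l c) in HN; [|exact Hc].
  replace (c * (x / c)) with x in HN by (field; lra). lra.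
Qed.

Lemma Un_cv_dist_le (u : nat -> R) (l c B : R) (n : nat) :
  Un_cv u l -> (forall m, (m >= n)%nat -> Rabs (u m - c) <= B) -> Rabs (l - c) <= B.
Proof.
  intros Hu H. destruct (Rle_or_lt (Rabs (l - c)) B) as [|HB]; auto. exfalso.
  destruct (Hu (Rabs (l - c) - B)) as [N HN]; [lra|].
  specialize (HN (max N n) (Nat.le_max_l _ _)). specialize (H (max N n) (Nat.le_max_r _ _)).
  unfold Rdist in HN.
  assert (Rabs (l - c) <= Rabs (u (max N n) - l) + Rabs (u (max N n) - c)).
  { replace (l - c) with (- (u (max N n) - l) + (u (max N n) - c)) by ring.
    eapply Rle_trans; [apply Rabs_triang|]. rewrite Rabs_Ropp. lra. }
  lra.
Qed.

Lemma Cauchy_crit_of_geometric (u : nat -> R) (K : R) :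
  (forall n m, (n <= m)%nat -> Rabs (u m - u n) <= K * (1/2) ^ n) -> Cauchy_crit u.
Proof.
  intros H eps Heps.
  assert (HK : 0 <= K) by (specialize (H 0%nat 0%nat (le_n 0)); simpl in H;
    assert (H0 := Rabs_pos (u 0%nat - u 0%nat)); lra).
  destruct (pow_lt_1_zero (1/2) ltac:(rewrite Rabs_right; lra) (eps / (K + 1))) as [N HN];
    [apply Rdiv_lt_0_compat; lra|].
  specialize (HN N (le_n N)). rewrite Rabs_right in HN by (apply Rle_ge, pow_le; lra).
  assert (Hsmall : forall n, (n >= N)%nat -> K * (1/2) ^ n < eps).
  { intros n Hn. assert (Hp := pow_le_pow_of_le1 (1/2) N n ltac:(lra) Hn).
    assert (H0 : 0 <= (1/2) ^ n) by (apply pow_le; lra).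
    apply (Rmult_lt_compat_l (K + 1)) in HN; [|lra].
    replace ((K + 1) * (eps / (K + 1))) with eps in HN by (field; lra). nra. }
  exists N. intros n m Hn Hm. unfold Rdist.
  destruct (Nat.le_ge_cases n m) as [Hnm|Hmn].
  - rewrite <- Rabs_Ropp, Ropp_minus_distr.
    eapply Rle_lt_trans; [apply H, Hnm|]. apply Hsmall, Hn.
  - eapply Rle_lt_trans; [apply H, Hmn|]. apply Hsmall, Hm.
Qed.

Lemma Cx_limit_of_geometric (x : nat -> Cx) (K : R) :
  (forall n m, (n <= m)%nat -> Cnorm (Csub (x m) (x n)) <= K * (1/2) ^ n) ->
  exists l, forall n, Cnorm (Csub l (x n)) <= 2 * K * (1/2) ^ n.
Proof.
  intro H.
  assert (Hfst : forall n m, (n <= m)%nat -> Rabs (fst (x m) - fst (x n)) <= K * (1/2) ^ n).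
  { intros n m Hnm. eapply Rle_trans; [|apply H, Hnm]. apply (Rabs_fst_le_Cnorm (Csub _ _)). }
  assert (Hsnd : forall n m, (n <= m)%nat -> Rabs (snd (x m) - snd (x n)) <= K * (1/2) ^ n).
  { intros n m Hnm. eapply Rle_trans; [|apply H, Hnm]. apply (Rabs_snd_le_Cnorm (Csub _ _)). }
  destruct (R_complete _ (Cauchy_crit_of_geometric _ _ Hfst)) as [l1 Hl1].
  destruct (R_complete _ (Cauchy_crit_of_geometric _ _ Hsnd)) as [l2 Hl2].
  exists (l1, l2). intro n. eapply Rle_trans; [apply Cnorm_le_Rabs_sum|]. simpl.
  assert (H1 := Un_cv_dist_le _ _ _ _ n Hl1 (fun m Hm => Hfst n m Hm)).
  assert (H2 := Un_cv_dist_le _ _ _ _ n Hl2 (fun m Hm => Hsnd n m Hm)).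
  unfold Rminus in H1, H2. lra.
Qed.

Section Contraction.

Variables (F : Cx -> Cx) (sg : R).
Hypothesis F_maps_disk : forall d, Cnorm d <= sg -> Cnorm (F d) <= sg.
Hypothesis F_contracts : forall d e, Cnorm d <= sg -> Cnorm e <= sg ->
  Cnorm (Csub (F d) (F e)) <= 1/2 * Cnorm (Csub d e).

Let iterate (n : nat) : Cx := Nat.iter n F (0, 0).

Lemma iterate_in_disk (n : nat) : 0 <= sg -> Cnorm (iterate n) <= sg.
Proof.
  intro Hsg. induction n as [|n IH]; simpl.
  - unfold Cnorm; simpl. rewrite Rmult_0_l, Rplus_0_l, sqrt_0. exact Hsg.
  - apply F_maps_disk, IH.
Qed.

Lemma iterate_dist_le (n m : nat) : 0 <= sg -> (n <= m)%nat ->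
  Cnorm (Csub (iterate m) (iterate n)) <= 2 * sg * (1/2) ^ n.
Proof.
  intros Hsg Hnm.
  assert (Hstep : forall k, Cnorm (Csub (iterate (S k)) (iterate k)) <= sg * (1/2) ^ k).
  { induction k as [|k IH].
    - simpl. replace (Csub (F (0, 0)) (0, 0)) with (F (0, 0)) by (apply Cx_ext; simpl; ring).
      assert (H := iterate_in_disk 1 Hsg). simpl in H. lra.
    - change (iterate (S (S k))) with (F (iterate (S k))).
      change (iterate (S k)) with (F (iterate k)) at 2.
      eapply Rle_trans; [apply F_contracts; apply iterate_in_disk, Hsg|].
      change (F (iterate k)) with (iterate (S k)). simpl pow. lra. }
  replace m with (n + (m - n))%nat by lia.
  assert (Hsum : forall k, Cnorm (Csub (iterate (n + k)) (iterate n)) <=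
                           2 * sg * ((1/2) ^ n - (1/2) ^ (n + k))).
  { induction k as [|k IH].
    - rewrite Nat.add_0_r. replace (Csub (iterate n) (iterate n)) with (RtoC 0)
        by (apply Cx_ext; simpl; ring).
      rewrite Cnorm_RtoC, Rabs_R0. lra.
    - eapply Rle_trans; [apply (Cnorm_dist_triang _ (iterate (n + k)))|].
      rewrite Nat.add_succ_r. assert (H := Hstep (n + k)%nat). simpl pow. lra. }
  eapply Rle_trans; [apply Hsum|].
  assert (0 <= (1/2) ^ (n + (m - n))) by (apply pow_le; lra). nra.
Qed.

Lemma contraction_fixpoint : 0 <= sg -> exists d, Cnorm d <= sg /\ F d = d.
Proof.
  intro Hsg.
  destruct (Cx_limit_of_geometric iterate (2 * sg) (fun n m => iterate_dist_le n m Hsg))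
    as [d Hd].
  assert (Hdisk : Cnorm d <= sg).
  { enough (Cnorm d - sg <= 0) by lra.
    apply (le0_of_le_geometric _ (4 * sg)). intro n.
    assert (H := Cnorm_triang (Csub d (iterate n)) (iterate n)).
    replace (Cadd (Csub d (iterate n)) (iterate n)) with d in H by (apply Cx_ext; simpl; ring).
    assert (H1 := Hd n). assert (H2 := iterate_in_disk n Hsg). lra. }
  exists d. split; [exact Hdisk|]. apply Cx_eq_of_Cnorm_sub_le0.
  apply (le0_of_le_geometric _ (4 * sg)). intro n.
  eapply Rle_trans; [apply (Cnorm_dist_triang _ (F (iterate n)))|].
  assert (H1 := F_contracts d (iterate n) Hdisk (iterate_in_disk n Hsg)).
  assert (H2 := Hd (S n)). change (F (iterate n)) with (iterate (S n)) in *.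
  rewrite Cnorm_sub_sym in H2. assert (H3 := Hd n). simpl pow in H2. lra.
Qed.

End Contraction.

(** * Univalence and convexity of the quadratic map *)

Lemma quad_map_sub (A B u v : Cx) :
  Csub (quad_map A B u) (quad_map A B v) =
  Cadd (Cmul (Csub u v) (Cadd (RtoC 1) (Cmul A (Cadd u v))))
       (Cconj (Cmul B (Cmul (Csub u v) (Cadd u v)))).
Proof. apply Cx_ext; simpl; ring. Qed.

Lemma quad_map_injective (A B : Cx) (r : R) (u v : Cx) :
  4 * r * (Cnorm A + Cnorm B) <= 1 -> Cnorm u < r -> Cnorm v < r ->
  quad_map A B u = quad_map A B v -> u = v.
Proof.
  intros HK Hu Hv E.
  apply Cx_eq_of_Cnorm_sub_le0. apply Rnot_lt_le. intro Hpos.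
  set (s := Cadd u v).
  assert (E0 := quad_map_sub A B u v). rewrite E in E0.
  replace (Csub (quad_map A B v) (quad_map A B v)) with (RtoC 0) in E0
    by (apply Cx_ext; simpl; ring).
  assert (Hn : Cnorm (Cmul (Csub u v) (Cadd (RtoC 1) (Cmul A s))) =
               Cnorm (Cconj (Cmul B (Cmul (Csub u v) s)))).
  { rewrite <- Cnorm_opp. f_equal. apply Cx_ext.
    - assert (H := f_equal fst E0). simpl in *. lra.
    - assert (H := f_equal snd E0). simpl in *. lra. }
  rewrite Cnorm_conj, !Cnorm_mul in Hn.
  assert (H1 := Cnorm_triang_rev (RtoC 1) (Cmul A s)).
  rewrite Cnorm_RtoC, Cnorm_mul, Rabs_R1 in H1.
  assert (Hs : Cnorm s < 2 * r) by (assert (H := Cnorm_triang u v); unfold s; lra).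
  assert (HA := Cnorm_ge0 A). assert (HB := Cnorm_ge0 B). assert (HS := Cnorm_ge0 s).
  assert (HE : Cnorm (Cadd (RtoC 1) (Cmul A s)) = Cnorm B * Cnorm s).
  { apply (Rmult_eq_reg_l (Cnorm (Csub u v))); [|lra]. rewrite Hn. ring. }
  assert ((Cnorm A + Cnorm B) * Cnorm s <= (Cnorm A + Cnorm B) * (2 * r))
    by (apply Rmult_le_compat_l; lra).
  nra.
Qed.

Lemma Cnorm_semilinear_le (A B X : Cx) :
  Cnorm (Cadd (Cmul A X) (Cconj (Cmul B X))) <= (Cnorm A + Cnorm B) * Cnorm X.
Proof. eapply Rle_trans; [apply Cnorm_triang|]. rewrite Cnorm_conj, !Cnorm_mul. lra. Qed.

Lemma quad_map_shift (A B z0 d : Cx) :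
  quad_map A B (Cadd z0 d) = Cadd (Cadd (quad_map A B z0) d)
     (Cadd (Cmul A (Cmul d (Cadd (Cmul (RtoC 2) z0) d)))
           (Cconj (Cmul B (Cmul d (Cadd (Cmul (RtoC 2) z0) d))))).
Proof. apply Cx_ext; simpl; ring. Qed.

(* Solve [quad_map A B (z0 + d) = w] as a fixed point of
   [d |-> (w - quad_map A B z0) - (A E d + conj (B E d))], [E d = d (2 z0 + d)]. *)
Lemma quad_map_local_solve (A B z0 w : Cx) (rho sg : R) : 0 <= sg -> Cnorm z0 <= rho ->
  (Cnorm A + Cnorm B) * (2 * rho + 2 * sg) <= 1/2 ->
  Cnorm (Csub w (quad_map A B z0)) <= sg / 2 ->
  exists z, Cnorm (Csub z z0) <= sg /\ quad_map A B z = w.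
Proof.
  intros Hs Hz0 HK Hw.
  set (K := Cnorm A + Cnorm B) in HK.
  assert (HK0 : 0 <= K) by (unfold K; assert (H1 := Cnorm_ge0 A);
    assert (H2 := Cnorm_ge0 B); lra).
  set (E := fun d => Cmul d (Cadd (Cmul (RtoC 2) z0) d)).
  set (F := fun d => Csub (Csub w (quad_map A B z0)) (Cadd (Cmul A (E d)) (Cconj (Cmul B (E d))))).
  assert (H2z0 : Cnorm (Cmul (RtoC 2) z0) <= 2 * rho)
    by (rewrite Cnorm_mul, Cnorm_RtoC, Rabs_right by lra; lra).
  destruct (contraction_fixpoint F sg) as [d [Hd Fd]]; [| |exact Hs|].
  - intros d Hd. unfold F. eapply Rle_trans; [apply Cnorm_sub_le|].
    eapply Rle_trans; [apply Rplus_le_compat_l, Cnorm_semilinear_le|]. fold K.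
    assert (HE : Cnorm (E d) <= sg * (2 * rho + sg)).
    { unfold E. rewrite Cnorm_mul. assert (H := Cnorm_triang (Cmul (RtoC 2) z0) d).
      apply Rmult_le_compat; try apply Cnorm_ge0; lra. }
    assert (K * Cnorm (E d) <= K * (sg * (2 * rho + sg))) by (apply Rmult_le_compat_l; auto).
    assert (K * (2 * rho + sg) <= 1/2) by (eapply Rle_trans; [|apply HK];
      apply Rmult_le_compat_l; lra).
    assert (sg * (K * (2 * rho + sg)) <= sg * (1/2)) by (apply Rmult_le_compat_l; lra).
    nra.
  - intros d e Hd He. unfold F.
    set (s := Cadd (Cadd (Cmul (RtoC 2) z0) d) e).
    replace (Csub _ _) with (Copp (Cadd (Cmul A (Cmul (Csub d e) s))
                                        (Cconj (Cmul B (Cmul (Csub d e) s)))))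
      by (unfold E, s; apply Cx_ext; simpl; ring).
    rewrite Cnorm_opp. eapply Rle_trans; [apply Cnorm_semilinear_le|]. fold K.
    rewrite Cnorm_mul.
    assert (Hsn : Cnorm s <= 2 * rho + 2 * sg).
    { assert (H1 := Cnorm_triang (Cadd (Cmul (RtoC 2) z0) d) e).
      assert (H2 := Cnorm_triang (Cmul (RtoC 2) z0) d). unfold s. lra. }
    assert (H0 := Cnorm_ge0 (Csub d e)).
    assert (K * Cnorm s <= 1/2) by (eapply Rle_trans; [|apply HK];
      apply Rmult_le_compat_l; auto).
    nra.
  - exists (Cadd z0 d). split.
    + replace (Csub (Cadd z0 d) z0) with d by (apply Cx_ext; simpl; ring). exact Hd.
    + rewrite quad_map_shift.
      assert (F1 := f_equal fst Fd). assert (F2 := f_equal snd Fd). unfold F, E in F1, F2.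
      apply Cx_ext; simpl in *; lra.
Qed.

Definition segment_point (w1 w2 : Cx) (t : R) : Cx :=
  Cadd (Cmul (RtoC t) w1) (Cmul (RtoC (1 - t)) w2).

Lemma segment_point_dist (w1 w2 : Cx) (t t' : R) :
  Cnorm (Csub (segment_point w1 w2 t) (segment_point w1 w2 t')) =
  Rabs (t - t') * Cnorm (Csub w1 w2).
Proof.
  replace (Csub (segment_point w1 w2 t) (segment_point w1 w2 t'))
    with (Cmul (RtoC (t - t')) (Csub w1 w2)) by (unfold segment_point; apply Cx_ext; simpl; ring).
  rewrite Cnorm_mul, Cnorm_RtoC. reflexivity.
Qed.

(* Both endpoints lie strictly on the inner side of the tangent line at [quad_map A B z]
   (by [quad_support_pos]), hence so does the whole segment. *)
Lemma quad_segment_preimage_le (A B z z1 z2 : Cx) (M t : R) :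
  Cnorm z1 <= M -> Cnorm z2 <= M -> 4 * Cnorm z * (Cnorm A + Cnorm B) < 1 -> 0 <= t <= 1 ->
  quad_map A B z = segment_point (quad_map A B z1) (quad_map A B z2) t -> Cnorm z <= M.
Proof.
  intros H1 H2 HK Ht E. apply Rnot_lt_le. intro Hz.
  assert (K1 := quad_support_pos A B z z1 ltac:(lra) HK).
  assert (K2 := quad_support_pos A B z z2 ltac:(lra) HK).
  set (n := Cconj (quad_normal A B z)) in *.
  set (L := fun x : Cx => fst (Cmul n x)).
  assert (Lsub : forall x y, fst (Cmul n (Csub x y)) = L x - L y)
    by (intros; unfold L; simpl; ring).
  rewrite Lsub, E in K1, K2.
  assert (LW : forall w1 w2, L (segment_point w1 w2 t) = t * L w1 + (1 - t) * L w2)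
    by (intros; unfold L, segment_point; simpl; ring).
  rewrite LW in K1, K2.
  set (l1 := L (quad_map A B z1)) in *. set (l2 := L (quad_map A B z2)) in *.
  destruct (Rle_or_lt l1 l2); nra.
Qed.

Lemma unit_interval_step_ind (P : R -> Prop) (dl : R) : 0 < dl -> P 0 ->
  (forall s t, 0 <= s <= t -> t <= 1 -> t - s <= dl -> P s -> P t) ->
  forall t, 0 <= t <= 1 -> P t.
Proof.
  intros Hdl H0 Hstep.
  assert (Hn : forall n t, 0 <= t <= 1 -> t <= INR n * dl -> P t).
  { induction n as [|n IH]; intros t Ht Htn.
    - simpl in Htn. replace t with 0 by lra. exact H0.
    - destruct (Rle_or_lt t (INR n * dl)) as [Hle|Hlt]; [apply IH; auto|].
      rewrite S_INR in Htn. assert (H := pos_INR n).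
      apply (Hstep (Rmax 0 (t - dl))).
      + split; [apply Rmax_l|apply Rmax_lub; lra].
      + lra.
      + assert (H1 := Rmax_r 0 (t - dl)). lra.
      + apply IH; [split; [apply Rmax_l|apply Rmax_lub; lra]|].
        apply Rmax_lub; nra. }
  intros t Ht. destruct (INR_unbounded (1 / dl)) as [n Hn1].
  apply (Hn n t Ht).
  apply (Rmult_lt_compat_r dl) in Hn1; [|exact Hdl].
  replace (1 / dl * dl) with 1 in Hn1 by (field; lra). lra.
Qed.

(* The segment between two image points is followed continuously by preimages: small steps
   are solved by [quad_map_local_solve], and [quad_segment_preimage_le] keeps the preimages
   in the disk [|z| <= max (|z1|, |z2|)], where the local solution stays available. *)
Lemma quad_map_convex (A B : Cx) (r : R) : 0 < r -> 4 * r * (Cnorm A + Cnorm B) <= 1 ->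
  convex_in_disk (quad_map A B) r.
Proof.
  intros Hr HK. split.
  { intros u v. apply (quad_map_injective A B r u v HK). }
  intros w1 w2 t [z1 [Hz1 E1]] [z2 [Hz2 E2]] Ht. subst w1 w2.
  set (M := Rmax (Cnorm z1) (Cnorm z2)).
  assert (HM1 : Cnorm z1 <= M) by apply Rmax_l.
  assert (HM2 : Cnorm z2 <= M) by apply Rmax_r.
  assert (HMr : M < r) by (apply Rmax_lub_lt; auto).
  set (sg := (r - M) / 2).
  set (dw := Cnorm (Csub (quad_map A B z1) (quad_map A B z2))).
  assert (Hdw : 0 <= dw) by apply Cnorm_ge0.
  assert (HK0 : 0 <= Cnorm A + Cnorm B)
    by (assert (H1 := Cnorm_ge0 A); assert (H2 := Cnorm_ge0 B); lra).
  enough (H : exists z, Cnorm z <= M /\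
            quad_map A B z = segment_point (quad_map A B z1) (quad_map A B z2) t)
    by (destruct H as [z [Hz E]]; exists z; split; [lra|exact E]).
  revert t Ht.
  apply (unit_interval_step_ind (fun t => exists z, Cnorm z <= M /\
           quad_map A B z = segment_point (quad_map A B z1) (quad_map A B z2) t)
           (sg / 2 / (dw + 1)));
    [apply Rdiv_lt_0_compat; unfold sg; lra| |].
  { exists z2. split; [exact HM2|]. unfold segment_point. apply Cx_ext; simpl; ring. }
  intros s t' Hs Ht' Hst [z' [Hz' E']].
  destruct (quad_map_local_solve A B z'
              (segment_point (quad_map A B z1) (quad_map A B z2) t') M sg)
    as [z [Hzz E]]; [unfold sg; lra|exact Hz'| | |].
  - unfold sg. replace (2 * M + 2 * ((r - M) / 2)) with (M + r) by field. nra.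
  - rewrite E', segment_point_dist. fold dw. rewrite Rabs_right by lra.
    apply (Rmult_le_compat_r dw) in Hst; [|exact Hdw].
    assert (sg / 2 / (dw + 1) * dw <= sg / 2).
    { apply (Rmult_le_reg_r (dw + 1)); [lra|].
      replace (sg / 2 / (dw + 1) * dw * (dw + 1)) with (sg / 2 * dw) by (field; lra).
      unfold sg. nra. }
    lra.
  - exists z. split; [|exact E].
    apply (quad_segment_preimage_le A B z z1 z2 M t'); auto; [|lra].
    assert (H := Cnorm_triang (Csub z z') z').
    replace (Cadd (Csub z z') z') with z in H by (apply Cx_ext; simpl; ring).
    assert (Hz : Cnorm z < r) by (unfold sg in *; lra).
    assert (H0 := Cnorm_ge0 z). nra.
Qed.

(** * Power series along rays *)

(* [ray_series c w t X]: the real and imaginary parts of [sum_n c_n (t w)^n], read as real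
   power series in [t], converge to those of [X]. *)
Definition ray_series (c : nat -> Cx) (w : Cx) (t : R) (X : Cx) : Prop :=
  is_pseries (fun n => fst (Cmul (c n) (Cpow w n))) t (fst X) /\
  is_pseries (fun n => snd (Cmul (c n) (Cpow w n))) t (snd X).

Lemma is_pseries_Un_cv (a : nat -> R) (t l : R) :
  is_pseries a t l <-> Un_cv (fun N => sum_f_R0 (fun n => a n * t ^ n) N) l.
Proof. rewrite is_pseries_Reals. reflexivity. Qed.

Lemma Un_cv_ext (u v : nat -> R) (l : R) : (forall n, u n = v n) -> Un_cv u l -> Un_cv v l.
Proof.
  intros H Hu eps He. destruct (Hu eps He) as [N HN].
  exists N. intros n Hn. rewrite <- H. auto.
Qed.

Lemma Cpow_RtoC_mul (t : R) (w : Cx) (n : nat) :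
  Cpow (Cmul (RtoC t) w) n = Cmul (RtoC (t ^ n)) (Cpow w n).
Proof.
  induction n as [|n IH]; simpl Cpow; [|rewrite IH]; apply Cx_ext; simpl; ring.
Qed.

Lemma ray_series_of_Cseries (a : nat -> Cx) (w : Cx) (t : R) (X : Cx) :
  Cseries_sum (fun n => Cmul (a n) (Cpow (Cmul (RtoC t) w) n)) X -> ray_series a w t X.
Proof.
  intros [H1 H2]. split; apply is_pseries_Un_cv.
  - eapply Un_cv_ext; [|exact H1]. intro N. apply sum_eq. intros i _.
    rewrite Cpow_RtoC_mul. simpl. ring.
  - eapply Un_cv_ext; [|exact H2]. intro N. apply sum_eq. intros i _.
    rewrite Cpow_RtoC_mul. simpl. ring.
Qed.

Lemma Rabs_le_sum_Rabs (u : nat -> R) (N i : nat) :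
  (i <= N)%nat -> Rabs (u i) <= sum_f_R0 (fun k => Rabs (u k)) N.
Proof.
  induction N as [|N IH]; intro H.
  - replace i with 0%nat by lia. simpl. lra.
  - simpl. assert (H0 : 0 <= sum_f_R0 (fun k => Rabs (u k)) N)
      by (apply cond_pos_sum; intro; apply Rabs_pos).
    destruct (Nat.eq_dec i (S N)) as [->|E]; [lra|].
    assert (H1 := IH ltac:(lia)). assert (H2 := Rabs_pos (u (S N))). lra.
Qed.

Lemma series_terms_bounded (u : nat -> R) (l : R) :
  Un_cv (fun N => sum_f_R0 u N) l -> exists M, forall n, Rabs (u n) <= M.
Proof.
  intro H. destruct (H (1/2)) as [N HN]; [lra|].
  exists (1 + sum_f_R0 (fun k => Rabs (u k)) N). intro n.
  assert (0 <= sum_f_R0 (fun k => Rabs (u k)) N)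
    by (apply cond_pos_sum; intro; apply Rabs_pos).
  destruct (Nat.le_gt_cases n N) as [Hn|Hn].
  - assert (H1 := Rabs_le_sum_Rabs u N n Hn). lra.
  - destruct n as [|n]; [lia|].
    assert (A1 := HN (S n) ltac:(lia)). assert (A2 := HN n ltac:(lia)).
    unfold Rdist in *. simpl in A1.
    replace (u (S n)) with ((sum_f_R0 u n + u (S n) - l) - (sum_f_R0 u n - l)) by ring.
    eapply Rle_trans; [apply Rabs_triang|]. rewrite Rabs_Ropp. lra.
Qed.

Lemma CV_radius_gt (a : nat -> R) :
  (forall t, Rabs t < 1 -> exists l, is_pseries a t l) ->
  forall t, Rabs t < 1 -> Rbar_lt (Rabs t) (CV_radius a).
Proof.
  intros H t Ht. set (t' := (Rabs t + 1) / 2).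
  assert (Ht' : Rabs t' < 1)
    by (unfold t'; rewrite Rabs_right; assert (H0 := Rabs_pos t); lra).
  destruct (H t' Ht') as [l Hl]. apply is_pseries_Un_cv in Hl.
  destruct (series_terms_bounded _ _ Hl) as [M HM].
  assert (Hub : Rbar_le t' (CV_radius a)).
  { destruct (CV_radius_bounded a) as [Hu _]. apply Hu. exists M. exact HM. }
  destruct (CV_radius a) as [x| |]; simpl in *; auto.
  unfold t' in Hub. lra.
Qed.

Lemma derivable_pt_lim_ray (f f1 : Cx -> Cx) (w : Cx) (t : R) : Cnorm w = 1 -> Rabs t < 1 ->
  (forall z, inD z -> Cderiv f z (f1 z)) ->
  derivable_pt_lim (fun s => fst (f (Cmul (RtoC s) w))) t
    (fst (Cmul (f1 (Cmul (RtoC t) w)) w)) /\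
  derivable_pt_lim (fun s => snd (f (Cmul (RtoC s) w))) t
    (snd (Cmul (f1 (Cmul (RtoC t) w)) w)).
Proof.
  intros Hw Ht Hd.
  set (z := Cmul (RtoC t) w).
  assert (Hz : inD z) by (unfold inD, z; rewrite Cnorm_mul, Cnorm_RtoC, Hw; lra).
  assert (Hw2 : fst w * fst w + snd w * snd w = 1) by (rewrite <- Cnorm_sqr, Hw; ring).
  assert (Key : forall eps, 0 < eps -> exists del, 0 < del /\ forall h, h <> 0 -> Rabs h < del ->
     Cnorm (Csub (Cmul (RtoC (/ h)) (Csub (f (Cmul (RtoC (t + h)) w)) (f z)))
                 (Cmul (f1 z) w)) < eps).
  { intros eps He. destruct (Hd z Hz eps He) as [del [Hdel Hdd]].
    exists del. split; auto. intros h Hh0 Hh.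
    set (wh := Cmul (RtoC h) w).
    assert (Hwh : Cnorm wh = Rabs h) by (unfold wh; rewrite Cnorm_mul, Cnorm_RtoC, Hw; ring).
    assert (Hwh0 : 0 < Cnorm wh) by (rewrite Hwh; apply Rabs_pos_lt; auto).
    specialize (Hdd wh ltac:(lra)).
    replace (Cadd z wh) with (Cmul (RtoC (t + h)) w) in Hdd
      by (unfold z, wh; apply Cx_ext; simpl; ring).
    replace (Csub (Cmul (RtoC (/ h)) (Csub (f (Cmul (RtoC (t + h)) w)) (f z))) (Cmul (f1 z) w))
      with (Cmul w (Csub (Cdiv (Csub (f (Cmul (RtoC (t + h)) w)) (f z)) wh) (f1 z))).
    - rewrite Cnorm_mul, Hw. lra.
    - unfold Cdiv, Cinv, wh. destruct w as [w1 w2]. simpl in Hw2.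
      apply Cx_ext; simpl; field; split; auto; nra. }
  split; intros eps He; destruct (Key eps He) as [del [Hdel HK]];
    exists (mkposreal del Hdel); intros h Hh0 Hh; simpl in Hh; specialize (HK h Hh0 Hh).
  - eapply Rle_lt_trans; [|exact HK]. eapply Rle_trans; [|apply Rabs_fst_le_Cnorm].
    right. f_equal. fold z. simpl. field. auto.
  - eapply Rle_lt_trans; [|exact HK]. eapply Rle_trans; [|apply Rabs_snd_le_Cnorm].
    right. f_equal. fold z. simpl. field. auto.
Qed.

Lemma is_pseries_derive_of_derivable (a : nat -> R) (phi : R -> R) (t d : R) :
  (forall s, Rabs s < 1 -> is_pseries a s (phi s)) -> Rabs t < 1 ->
  derivable_pt_lim phi t d -> is_pseries (PS_derive a) t d.
Proof.
  intros H Ht Hd.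
  assert (Hr := CV_radius_gt a (fun s Hs => ex_intro _ (phi s) (H s Hs)) t Ht).
  assert (D1 := is_derive_PSeries a t Hr).
  assert (D2 : is_derive phi t (PSeries (PS_derive a) t)).
  { apply (is_derive_ext_loc (PSeries a)); auto.
    assert (Hp : 0 < (1 - Rabs t) / 2) by lra.
    exists (mkposreal _ Hp). intros s Hs. simpl in Hs.
    unfold ball in Hs; simpl in Hs; unfold AbsRing_ball, abs, minus, plus, opp in Hs;
      simpl in Hs.
    apply is_pseries_unique. apply H.
    assert (Rabs s <= Rabs (s + - t) + Rabs t).
    { replace s with ((s + - t) + t) at 1 by ring. apply Rabs_triang. }
    lra. }
  apply is_derive_Reals in Hd.
  replace d with (PSeries (PS_derive a) t)
    by (rewrite <- (is_derive_unique _ _ _ Hd); symmetry; apply is_derive_unique; exact D2).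
  apply PSeries_correct. apply ex_pseries_derive. exact Hr.
Qed.

Lemma ray_series_derive_mul (c : nat -> Cx) (f f1 : Cx -> Cx) (w : Cx) : Cnorm w = 1 ->
  (forall t, Rabs t < 1 -> ray_series c w t (f (Cmul (RtoC t) w))) ->
  (forall z, inD z -> Cderiv f z (f1 z)) ->
  forall t, Rabs t < 1 ->
  ray_series (fun n => Cmul (RtoC (INR (S n))) (Cmul w (c (S n)))) w t
             (Cmul (f1 (Cmul (RtoC t) w)) w).
Proof.
  intros Hw Hc Hd t Ht. destruct (derivable_pt_lim_ray f f1 w t Hw Ht Hd) as [D1 D2]. split.
  - eapply is_pseries_ext; [|apply (is_pseries_derive_of_derivable
      (fun n => fst (Cmul (c n) (Cpow w n))) (fun s => fst (f (Cmul (RtoC s) w)))); auto].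
    + intro n. unfold PS_derive. simpl Cpow. simpl. ring.
    + intros s Hs. apply (Hc s Hs).
  - eapply is_pseries_ext; [|apply (is_pseries_derive_of_derivable
      (fun n => snd (Cmul (c n) (Cpow w n))) (fun s => snd (f (Cmul (RtoC s) w)))); auto].
    + intro n. unfold PS_derive. simpl Cpow. simpl. ring.
    + intros s Hs. apply (Hc s Hs).
Qed.

Lemma is_pseries_lin (a b : nat -> R) (x y t la lb : R) :
  is_pseries a t la -> is_pseries b t lb ->
  is_pseries (fun n => x * a n + y * b n) t (x * la + y * lb).
Proof.
  intros Ha Hb.
  exact (is_pseries_plus _ _ _ _ _ (is_pseries_scal x a t la ltac:(compute; ring) Ha)
                                   (is_pseries_scal y b t lb ltac:(compute; ring) Hb)).
Qed.

Lemma ray_series_ext (c d : nat -> Cx) (w : Cx) (t : R) (X : Cx) :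
  (forall n, c n = d n) -> ray_series c w t X -> ray_series d w t X.
Proof.
  intros H [H1 H2].
  split; (eapply is_pseries_ext; [|eassumption]); intro n; simpl; rewrite H; auto.
Qed.

Lemma ray_series_add (c d : nat -> Cx) (w : Cx) (t : R) (X Y : Cx) :
  ray_series c w t X -> ray_series d w t Y ->
  ray_series (fun n => Cadd (c n) (d n)) w t (Cadd X Y).
Proof.
  intros [H1 H2] [H3 H4].
  assert (H13 := is_pseries_lin _ _ 1 1 t _ _ H1 H3).
  assert (H24 := is_pseries_lin _ _ 1 1 t _ _ H2 H4).
  rewrite !Rmult_1_l in H13, H24.
  split; (eapply is_pseries_ext; [|eassumption]); intro n; simpl; ring.
Qed.

Lemma ray_series_scal (k : Cx) (c : nat -> Cx) (w : Cx) (t : R) (X : Cx) :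
  ray_series c w t X -> ray_series (fun n => Cmul k (c n)) w t (Cmul k X).
Proof.
  intros [H1 H2].
  assert (Hre := is_pseries_lin _ _ (fst k) (- snd k) t _ _ H1 H2).
  assert (Him := is_pseries_lin _ _ (snd k) (fst k) t _ _ H1 H2).
  split.
  - replace (fst (Cmul k X)) with (fst k * fst X + - snd k * snd X) by (simpl; ring).
    eapply is_pseries_ext; [|exact Hre]. intro n. simpl. ring.
  - replace (snd (Cmul k X)) with (snd k * fst X + fst k * snd X) by (simpl; ring).
    eapply is_pseries_ext; [|exact Him]. intro n. simpl. ring.
Qed.

Definition shift_coef (c : nat -> Cx) (n : nat) : Cx :=
  match n with O => (0, 0) | S m => c m end.

Lemma ray_series_shift (c : nat -> Cx) (w : Cx) (t : R) (X : Cx) :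
  ray_series c w t X -> ray_series (shift_coef c) w t (Cmul (RtoC t) (Cmul w X)).
Proof.
  intro H. destruct (ray_series_scal w c w t X H) as [H1 H2].
  apply is_pseries_incr_1 in H1. apply is_pseries_incr_1 in H2. split.
  - replace (fst (Cmul (RtoC t) (Cmul w X))) with (scal t (fst (Cmul w X))) by (compute; ring).
    eapply is_pseries_ext; [|exact H1]. intros [|n]; simpl; [compute; ring|ring].
  - replace (snd (Cmul (RtoC t) (Cmul w X))) with (scal t (snd (Cmul w X))) by (compute; ring).
    eapply is_pseries_ext; [|exact H2]. intros [|n]; simpl; [compute; ring|ring].
Qed.

Definition const_coef (k : Cx) (n : nat) : Cx := match n with O => k | S _ => (0, 0) end.

Lemma is_pseries_const (x t : R) : is_pseries (fun n => match n with O => x | S _ => 0 end) t x.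
Proof.
  apply is_pseries_Un_cv. intros eps He. exists 0%nat. intros n _.
  replace (sum_f_R0 _ n) with x; [rewrite R_dist_eq; lra|].
  induction n as [|n IH]; [simpl; ring|]. rewrite tech5, <- IH. simpl. ring.
Qed.

Lemma ray_series_const (k w : Cx) (t : R) : ray_series (const_coef k) w t k.
Proof.
  split; (eapply is_pseries_ext; [|apply is_pseries_const]); intros [|n]; simpl; ring.
Qed.

(** * Trigonometric sums over roots of unity *)

Lemma sum_cos_telescope (x : R) (K : nat) :
  2 * sin (x / 2) * sum_f_R0 (fun k => cos (INR k * x)) K =
  sin ((INR K + 1/2) * x) + sin (x / 2).
Proof.
  induction K as [|K IH].
  - simpl. rewrite Rmult_0_l, cos_0. replace ((0 + 1/2) * x) with (x / 2) by field. ring.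
  - rewrite tech5, Rmult_plus_distr_l, IH, S_INR.
    replace ((INR K + 1 + 1/2) * x) with ((INR K + 1) * x + x / 2) by field.
    replace ((INR K + 1/2) * x) with ((INR K + 1) * x - x / 2) by field.
    rewrite sin_plus, sin_minus. ring.
Qed.

Lemma sum_sin_telescope (x : R) (K : nat) :
  2 * sin (x / 2) * sum_f_R0 (fun k => sin (INR k * x)) K =
  cos (x / 2) - cos ((INR K + 1/2) * x).
Proof.
  induction K as [|K IH].
  - simpl. rewrite Rmult_0_l, sin_0. replace ((0 + 1/2) * x) with (x / 2) by field. ring.
  - rewrite tech5, Rmult_plus_distr_l, IH, S_INR.
    replace ((INR K + 1 + 1/2) * x) with ((INR K + 1) * x + x / 2) by field.
    replace ((INR K + 1/2) * x) with ((INR K + 1) * x - x / 2) by field.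
    rewrite cos_plus, cos_minus. ring.
Qed.

Definition root_angle (N k : nat) : R := 2 * PI * INR k / INR N.

Lemma sum_root_angle_trig (N j : nat) (a b : R) : (1 <= j < N)%nat ->
  sum_f_R0 (fun k => a * cos (INR j * root_angle N k) + b * sin (INR j * root_angle N k))
    (N - 1) = 0.
Proof.
  intros Hj. set (x := 2 * PI * INR j / INR N).
  assert (HN : 0 < INR N) by (apply lt_0_INR; lia).
  assert (Hx : forall k, INR j * root_angle N k = INR k * x)
    by (intro k; unfold root_angle, x; field; lra).
  assert (Hs : 0 < sin (x / 2)).
  { assert (Hpi := PI_RGT_0).
    assert (Hj0 : 0 < INR j) by (apply lt_0_INR; lia).
    assert (HjN : INR j < INR N) by (apply lt_INR; lia).
    replace (x / 2) with (PI * (INR j / INR N)) by (unfold x; field; lra).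
    assert (0 < INR j / INR N < 1) by (split; [apply Rdiv_lt_0_compat|apply Rlt_div_l]; lra).
    apply sin_gt_0; nra. }
  assert (HK : (INR (N - 1) + 1/2) * x = - (x / 2) + 2 * INR j * PI).
  { rewrite minus_INR by lia. unfold x. simpl. field. lra. }
  assert (C1 : sum_f_R0 (fun k => cos (INR k * x)) (N - 1) = 0).
  { apply (Rmult_eq_reg_l (2 * sin (x / 2))); [|lra].
    rewrite sum_cos_telescope, HK, sin_period, sin_neg. ring. }
  assert (C2 : sum_f_R0 (fun k => sin (INR k * x)) (N - 1) = 0).
  { apply (Rmult_eq_reg_l (2 * sin (x / 2))); [|lra].
    rewrite sum_sin_telescope, HK, cos_period, cos_neg. ring. }
  rewrite sum_plus.
  replace (sum_f_R0 (fun k => a * cos (INR j * root_angle N k)) (N - 1))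
    with (a * sum_f_R0 (fun k => cos (INR k * x)) (N - 1))
    by (rewrite scal_sum; apply sum_eq; intros; rewrite Hx; ring).
  replace (sum_f_R0 (fun k => b * sin (INR j * root_angle N k)) (N - 1))
    with (b * sum_f_R0 (fun k => sin (INR k * x)) (N - 1))
    by (rewrite scal_sum; apply sum_eq; intros; rewrite Hx; ring).
  rewrite C1, C2. ring.
Qed.

Lemma Cpow_cos_sin (t : R) (n : nat) : Cpow (cos t, sin t) n = (cos (INR n * t), sin (INR n * t)).
Proof.
  induction n as [|n IH].
  - simpl. rewrite Rmult_0_l, cos_0, sin_0. reflexivity.
  - simpl Cpow. rewrite IH, S_INR.
    replace ((INR n + 1) * t) with (t + INR n * t) by ring.
    rewrite cos_plus, sin_plus. apply Cx_ext; simpl; ring.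
Qed.

Lemma Cnorm_cos_sin (t : R) : Cnorm (cos t, sin t) = 1.
Proof.
  unfold Cnorm; simpl. rewrite <- sqrt_1. f_equal.
  assert (H := sin2_cos2 t). unfold Rsqr in H. lra.
Qed.

(* The coefficient of [r^n] in [sum_k (1 + Re (m w_k)) Re p (r w_k)], for the [N]-th roots
   of unity [w_k], [m = (m1, m2)] and [p_n = (P1, P2)]: a discrete Fejér average. *)
Definition fejer_coef (N : nat) (m1 m2 P1 P2 : R) (n : nat) : R :=
  sum_f_R0 (fun k => (1 + m1 * cos (root_angle N k) - m2 * sin (root_angle N k)) *
    (P1 * cos (INR n * root_angle N k) - P2 * sin (INR n * root_angle N k))) (N - 1).

Lemma sum_plus3 (f g h : nat -> R) (K : nat) :
  sum_f_R0 (fun k => f k + g k + h k) K = sum_f_R0 f K + sum_f_R0 g K + sum_f_R0 h K.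
Proof. rewrite !sum_plus. reflexivity. Qed.

Lemma fejer_coef_0 (N : nat) (m1 m2 P1 P2 : R) : (2 <= N)%nat ->
  fejer_coef N m1 m2 P1 P2 0 = INR N * P1.
Proof.
  intro HN. unfold fejer_coef.
  rewrite (sum_eq _ (fun k => P1 + (P1 * m1 * cos (INR 1 * root_angle N k) +
                                    (- P1 * m2) * sin (INR 1 * root_angle N k)))).
  - rewrite sum_plus, sum_root_angle_trig, sum_cte by lia.
    replace (S (N - 1)) with N by lia. ring.
  - intros k _. simpl INR. rewrite Rmult_0_l, Rmult_1_l, cos_0, sin_0. ring.
Qed.

Lemma fejer_coef_1 (N : nat) (m1 m2 P1 P2 : R) : (3 <= N)%nat ->
  fejer_coef N m1 m2 P1 P2 1 = INR N * (m1 * P1 + m2 * P2) / 2.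
Proof.
  intro HN. unfold fejer_coef.
  set (A := (m1 * P1 + m2 * P2) / 2).
  set (C := (m1 * P1 - m2 * P2) / 2). set (D := - (m1 * P2 + m2 * P1) / 2).
  rewrite (sum_eq _ (fun k => A +
      (P1 * cos (INR 1 * root_angle N k) + (- P2) * sin (INR 1 * root_angle N k)) +
      (C * cos (INR 2 * root_angle N k) + D * sin (INR 2 * root_angle N k)))).
  - rewrite sum_plus3, !sum_root_angle_trig, sum_cte by lia.
    replace (S (N - 1)) with N by lia. unfold A. field.
  - intros k _. simpl INR. set (t := root_angle N k).
    assert (H := sin2_cos2 t). unfold Rsqr in H.
    replace A with (A * (sin t * sin t + cos t * cos t)) by (rewrite H; ring).
    replace ((1 + 1) * t) with (t + t) by ring.
    rewrite Rmult_1_l, cos_plus, sin_plus. unfold A, C, D. field.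
Qed.

Lemma fejer_coef_mid (N : nat) (m1 m2 P1 P2 : R) (n : nat) :
  (2 <= n)%nat -> (n <= N - 2)%nat -> fejer_coef N m1 m2 P1 P2 n = 0.
Proof.
  intros H1 H2. unfold fejer_coef.
  set (A := (m1 * P1 + m2 * P2) / 2). set (B := (m2 * P1 - m1 * P2) / 2).
  set (C := (m1 * P1 - m2 * P2) / 2). set (D := - (m1 * P2 + m2 * P1) / 2).
  rewrite (sum_eq _ (fun k =>
      (A * cos (INR (n - 1) * root_angle N k) + B * sin (INR (n - 1) * root_angle N k)) +
      (P1 * cos (INR n * root_angle N k) + (- P2) * sin (INR n * root_angle N k)) +
      (C * cos (INR (n + 1) * root_angle N k) + D * sin (INR (n + 1) * root_angle N k)))).
  - rewrite sum_plus3, !sum_root_angle_trig by lia. ring.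
  - intros k _. rewrite minus_INR, plus_INR by lia. simpl INR.
    replace ((INR n - 1) * root_angle N k) with (INR n * root_angle N k - root_angle N k)
      by ring.
    replace ((INR n + 1) * root_angle N k) with (INR n * root_angle N k + root_angle N k)
      by ring.
    rewrite cos_minus, sin_minus, cos_plus, sin_plus. unfold A, B, C, D. field.
Qed.

Lemma fejer_coef_bound (N : nat) (m1 m2 P1 P2 : R) (n : nat) :
  (1 <= N)%nat -> m1 * m1 + m2 * m2 = 1 ->
  Rabs (fejer_coef N m1 m2 P1 P2 n) <= 2 * INR N * Cnorm (P1, P2).
Proof.
  intros HN Hm. unfold fejer_coef. eapply Rle_trans; [apply Rsum_abs|].
  eapply Rle_trans; [apply (sum_Rle _ (fun _ => 2 * Cnorm (P1, P2)))|].
  - intros k _. rewrite Rabs_mult. set (t := root_angle N k).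
    assert (Hm1 : Cnorm (m1, m2) = 1) by (unfold Cnorm; simpl; rewrite Hm; apply sqrt_1).
    assert (Hw : Rabs (1 + m1 * cos t - m2 * sin t) <= 2).
    { assert (H := Rabs_fst_le_Cnorm (Cmul (m1, m2) (cos t, sin t))).
      rewrite Cnorm_mul, Hm1, Cnorm_cos_sin in H. simpl in H.
      apply Rabs_le_between in H. apply Rabs_le. lra. }
    assert (Hf : Rabs (P1 * cos (INR n * t) - P2 * sin (INR n * t)) <= Cnorm (P1, P2)).
    { assert (H := Rabs_fst_le_Cnorm (Cmul (P1, P2) (cos (INR n * t), sin (INR n * t)))).
      rewrite Cnorm_mul, Cnorm_cos_sin, Rmult_1_r in H. exact H. }
    apply Rmult_le_compat; auto; apply Rabs_pos.
  - rewrite sum_cte. replace (S (N - 1)) with N by lia. lra.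
Qed.

(** * A Carathéodory coefficient bound *)

Lemma Un_cv_le (u : nat -> R) (l B : R) :
  Un_cv u l -> (forall K, (1 <= K)%nat -> u K <= B) -> l <= B.
Proof.
  intros Hu H. destruct (Rle_or_lt l B) as [|HB]; auto. exfalso.
  destruct (Hu (l - B)) as [N HN]; [lra|].
  specialize (HN (S N) ltac:(lia)). specialize (H (S N) ltac:(lia)).
  unfold Rdist in HN. assert (H1 := Rle_abs (l - u (S N))).
  rewrite <- Rabs_Ropp, Ropp_minus_distr in H1. lra.
Qed.

Lemma partial_sum_gap_bound (f : nat -> R) (N : nat) (F0 F1 G q : R) :
  (3 <= N)%nat -> 0 <= q < 1 -> 0 <= G -> f 0%nat = F0 -> f 1%nat = F1 ->
  (forall n, (2 <= n)%nat -> (n <= N - 2)%nat -> f n = 0) ->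
  (forall n, Rabs (f n) <= G * q ^ n) ->
  forall K, (1 <= K)%nat -> sum_f_R0 f K <= F0 + F1 + G * (q ^ (N - 1) / (1 - q)).
Proof.
  intros HN Hq HG Hf0 Hf1 Hz Hb.
  (* the tail of the geometric bound actually used up to index [K] *)
  set (ext := fun K => if Nat.ltb K (N - 1) then 0 else (q ^ (N - 1) - q ^ (S K)) / (1 - q)).
  assert (Hmain : forall K, (1 <= K)%nat -> sum_f_R0 f K <= F0 + F1 + G * ext K).
  { intros K HK. induction K as [|K IH]; [lia|].
    destruct (Nat.eq_dec K 0) as [->|E].
    - simpl. rewrite Hf0, Hf1. unfold ext.
      replace (Nat.ltb 1 (N - 1)) with true by (symmetry; apply Nat.ltb_lt; lia). lra.
    - specialize (IH ltac:(lia)). rewrite tech5. unfold ext in *.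
      destruct (Nat.le_gt_cases (S K) (N - 2)) as [H1|H1].
      + rewrite (Hz (S K)) by lia.
        replace (Nat.ltb K (N - 1)) with true in IH by (symmetry; apply Nat.ltb_lt; lia).
        replace (Nat.ltb (S K) (N - 1)) with true by (symmetry; apply Nat.ltb_lt; lia). lra.
      + assert (Hf : f (S K) <= G * q ^ (S K))
          by (assert (H := Hb (S K)); apply Rabs_le_between in H; lra).
        replace (Nat.ltb (S K) (N - 1)) with false by (symmetry; apply Nat.ltb_ge; lia).
        destruct (Nat.ltb K (N - 1)) eqn:EK.
        * apply Nat.ltb_lt in EK. replace (N - 1)%nat with (S K) by lia.
          replace ((q ^ S K - q ^ S (S K)) / (1 - q)) with (q ^ S K) by (simpl; field; lra).
          lra.
        * replace ((q ^ (N - 1) - q ^ S (S K)) / (1 - q))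
            with ((q ^ (N - 1) - q ^ S K) / (1 - q) + q ^ (S K)) by (simpl; field; lra).
          lra. }
  intros K HK. eapply Rle_trans; [apply Hmain, HK|].
  apply Rplus_le_compat_l, Rmult_le_compat_l; [exact HG|].
  assert (0 <= q ^ (N - 1)) by (apply pow_le; lra).
  assert (0 <= q ^ S K) by (apply pow_le; lra).
  unfold ext. destruct (Nat.ltb K (N - 1)).
  - apply Rdiv_le_0_compat; lra.
  - unfold Rdiv. apply Rmult_le_compat_r; [left; apply Rinv_0_lt_compat|]; lra.
Qed.

Lemma is_pseries_finite_sum (a : nat -> nat -> R) (l c : nat -> R) (t : R) (K : nat) :
  (forall k, is_pseries (a k) t (l k)) ->
  is_pseries (fun n => sum_f_R0 (fun k => c k * a k n) K) t (sum_f_R0 (fun k => c k * l k) K).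
Proof.
  intro H. induction K as [|K IH]; simpl.
  - assert (H0 := is_pseries_lin _ _ (c 0%nat) 0 t _ _ (H 0%nat) (H 0%nat)).
    rewrite Rmult_0_l, Rplus_0_r in H0.
    eapply is_pseries_ext; [|exact H0]. intro n; simpl; ring.
  - assert (H2 := is_pseries_lin _ _ 1 (c (S K)) t _ _ IH (H (S K))).
    rewrite Rmult_1_l in H2. eapply is_pseries_ext; [|exact H2]. intro n. simpl. ring.
Qed.

Lemma Cpow_1 (n : nat) : Cpow (1, 0) n = (1, 0).
Proof. induction n as [|n IH]; simpl Cpow; [|rewrite IH]; apply Cx_ext; simpl; ring. Qed.

Lemma ray_series_coef_bounded (p : nat -> Cx) (t : R) (X : Cx) :
  ray_series p (1, 0) t X -> exists M, forall n, Cnorm (p n) * t ^ n <= M.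
Proof.
  intros [H1 H2]. apply is_pseries_Un_cv in H1. apply is_pseries_Un_cv in H2.
  destruct (series_terms_bounded _ _ H1) as [M1 HM1].
  destruct (series_terms_bounded _ _ H2) as [M2 HM2].
  exists (M1 + M2). intro n. specialize (HM1 n). specialize (HM2 n).
  rewrite Cpow_1 in HM1, HM2.
  replace (fst (Cmul (p n) (1, 0))) with (fst (p n)) in HM1 by (simpl; ring).
  replace (snd (Cmul (p n) (1, 0))) with (snd (p n)) in HM2 by (simpl; ring).
  rewrite Rabs_mult in HM1, HM2.
  assert (H := Cnorm_le_Rabs_sum (p n)). assert (H0 := Rabs_pos (t ^ n)).
  assert (Cnorm (p n) * t ^ n <= Cnorm (p n) * Rabs (t ^ n))
    by (apply Rmult_le_compat_l; [apply Cnorm_ge0|apply Rle_abs]).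
  assert (Cnorm (p n) * Rabs (t ^ n) <= (Rabs (fst (p n)) + Rabs (snd (p n))) * Rabs (t ^ n))
    by (apply Rmult_le_compat_r; auto).
  lra.
Qed.

Lemma geometric_tail_lt (q M gm : R) : 0 < q < 1 -> 0 <= M -> 0 < gm ->
  exists N, (3 <= N)%nat /\ 2 * M * (q ^ (N - 1) / (1 - q)) < gm.
Proof.
  intros Hq HM Hgm.
  destruct (pow_lt_1_zero q ltac:(rewrite Rabs_right; lra) (gm * (1 - q) / (2 * M + 1)))
    as [N0 HN0]; [apply Rdiv_lt_0_compat; [apply Rmult_lt_0_compat|]; lra|].
  exists (N0 + 3)%nat. split; [lia|].
  assert (H := HN0 (N0 + 3 - 1)%nat ltac:(lia)).
  rewrite Rabs_right in H by (apply Rle_ge, pow_le; lra).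
  apply Rlt_div_r in H; [|lra].
  assert (0 <= q ^ (N0 + 3 - 1)) by (apply pow_le; lra).
  replace (2 * M * (q ^ (N0 + 3 - 1) / (1 - q))) with (2 * M * q ^ (N0 + 3 - 1) / (1 - q))
    by (field; lra).
  apply Rlt_div_l; [lra|]. nra.
Qed.

Section Caratheodory.

Variable p : nat -> Cx.
Hypothesis p_ray_re_nonneg : forall w, Cnorm w = 1 -> forall t, 0 <= t < 1 ->
  exists X, ray_series p w t X /\ 0 <= fst X.

Let fejer_series (N : nat) (m1 m2 : R) (n : nat) : R :=
  fejer_coef N m1 m2 (fst (p n)) (snd (p n)) n.

Lemma fejer_series_nonneg (N : nat) (m1 m2 r : R) : m1 * m1 + m2 * m2 = 1 -> 0 <= r < 1 ->
  exists S, is_pseries (fejer_series N m1 m2) r S /\ 0 <= S.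
Proof.
  intros Hm Hr.
  set (om := fun k => (cos (root_angle N k), sin (root_angle N k)) : Cx).
  set (ell := fun k => PSeries (fun n => fst (Cmul (p n) (Cpow (om k) n))) r).
  assert (Hell : forall k,
    is_pseries (fun n => fst (Cmul (p n) (Cpow (om k) n))) r (ell k) /\ 0 <= ell k).
  { intro k. destruct (p_ray_re_nonneg (om k) (Cnorm_cos_sin _) r Hr) as [X [[HX _] HX0]].
    replace (ell k) with (fst X) by (symmetry; apply is_pseries_unique; exact HX). auto. }
  set (wk := fun k => 1 + m1 * cos (root_angle N k) - m2 * sin (root_angle N k)).
  assert (Hwk : forall k, 0 <= wk k).
  { intro k.
    assert (H := fst_ge_neg_Cnorm (Cmul (m1, m2) (cos (root_angle N k), sin (root_angle N k)))).
    rewrite Cnorm_mul, Cnorm_cos_sin in H.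
    replace (Cnorm (m1, m2)) with 1 in H by (unfold Cnorm; simpl; rewrite Hm, sqrt_1; ring).
    unfold wk. simpl in H. lra. }
  exists (sum_f_R0 (fun k => wk k * ell k) (N - 1)). split.
  - eapply is_pseries_ext;
      [|exact (is_pseries_finite_sum _ ell wk r (N - 1) (fun k => proj1 (Hell k)))].
    intro n. unfold fejer_series, fejer_coef. apply sum_eq. intros k _.
    unfold wk, om. rewrite Cpow_cos_sin. simpl. ring.
  - apply cond_pos_sum. intro k. apply Rmult_le_pos; [apply Hwk|apply Hell].
Qed.

(* Only the coefficients of index [0], [1] and [>= N - 1] survive the averaging. *)
Lemma fejer_series_le (N : nat) (m1 m2 r r' M S : R) :
  (3 <= N)%nat -> m1 * m1 + m2 * m2 = 1 -> 0 < r < r' ->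
  (forall n, Cnorm (p n) * r' ^ n <= M) -> is_pseries (fejer_series N m1 m2) r S ->
  S <= INR N * fst (p 0%nat) + INR N * (m1 * fst (p 1%nat) + m2 * snd (p 1%nat)) / 2 * r
       + 2 * INR N * M * ((r / r') ^ (N - 1) / (1 - r / r')).
Proof.
  intros HN Hm Hr HM HS. apply is_pseries_Un_cv in HS.
  set (q := r / r').
  assert (Hq : 0 <= q < 1) by (unfold q; split; [apply Rdiv_le_0_compat|apply Rlt_div_l]; lra).
  assert (HM0 : 0 <= M)
    by (specialize (HM 0%nat); simpl in HM; assert (H := Cnorm_ge0 (p 0%nat)); lra).
  assert (HNpos : 0 < INR N) by (apply lt_0_INR; lia).
  apply (Un_cv_le _ _ _ HS).
  apply partial_sum_gap_bound; [exact HN|exact Hq|nra| | | |].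
  - unfold fejer_series. rewrite fejer_coef_0 by lia. simpl. ring.
  - unfold fejer_series. rewrite fejer_coef_1 by lia. simpl. ring.
  - intros n Hn1 Hn2. unfold fejer_series. rewrite fejer_coef_mid by lia. ring.
  - intro n. unfold fejer_series. rewrite Rabs_mult.
    assert (Hb := fejer_coef_bound N m1 m2 (fst (p n)) (snd (p n)) n ltac:(lia) Hm).
    rewrite <- surjective_pairing in Hb.
    rewrite (Rabs_right (r ^ n)) by (apply Rle_ge, pow_le; lra).
    replace (r ^ n) with (q ^ n * r' ^ n)
      by (rewrite <- Rpow_mult_distr; f_equal; unfold q; field; lra).
    assert (HMn := HM n).
    assert (0 <= q ^ n) by (apply pow_le; lra).
    assert (0 <= r' ^ n) by (apply pow_le; lra).
    assert (Rabs (fejer_coef N m1 m2 (fst (p n)) (snd (p n)) n) * (q ^ n * r' ^ n) <=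
            2 * INR N * Cnorm (p n) * (q ^ n * r' ^ n))
      by (apply Rmult_le_compat_r; [nra|lra]).
    assert (2 * INR N * (Cnorm (p n) * r' ^ n) * q ^ n <= 2 * INR N * M * q ^ n).
    { apply Rmult_le_compat_r; auto. apply Rmult_le_compat_l; lra. }
    nra.
Qed.

(* Weighting [Re p] on a circle by [1 + Re (m w)], [m = - p_1 / |p_1|], isolates
   [1 - r |p_1| / 2] up to a tail that is small for many roots of unity. *)
Lemma caratheodory_coef1 : fst (p 0%nat) = 1 -> Cnorm (p 1%nat) <= 2.
Proof.
  intro H0. apply Rnot_lt_le. intro Ha.
  set (a := Cnorm (p 1%nat)) in *.
  set (P1 := fst (p 1%nat)). set (P2 := snd (p 1%nat)).
  assert (Ha2 : a * a = P1 * P1 + P2 * P2) by apply Cnorm_sqr.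
  set (m1 := - P1 / a). set (m2 := - P2 / a).
  assert (Hm : m1 * m1 + m2 * m2 = 1).
  { unfold m1, m2. replace (- P1 / a * (- P1 / a) + - P2 / a * (- P2 / a))
      with ((P1 * P1 + P2 * P2) / (a * a)) by (field; lra).
    rewrite <- Ha2. field. lra. }
  assert (Hmp : m1 * P1 + m2 * P2 = - a).
  { unfold m1, m2. replace (- P1 / a * P1 + - P2 / a * P2)
      with (- (P1 * P1 + P2 * P2) / a) by (field; lra).
    rewrite <- Ha2. field. lra. }
  set (r := (2 / a + 1) / 2). set (r' := (r + 1) / 2). set (q := r / r').
  assert (H2a : 0 < 2 / a < 1) by (split; [apply Rdiv_lt_0_compat|apply Rlt_div_l]; lra).
  assert (Hr : 0 < r < r') by (unfold r', r; lra).
  set (gm := r * a / 2 - 1).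
  assert (Hgm : 0 < gm) by (unfold gm, r; field_simplify; lra).
  destruct (p_ray_re_nonneg (RtoC 1) ltac:(rewrite Cnorm_RtoC; apply Rabs_R1) r')
    as [X1 [HX1 _]]; [unfold r', r; lra|].
  destruct (ray_series_coef_bounded p r' X1 HX1) as [M HM].
  assert (HM0 : 0 <= M)
    by (specialize (HM 0%nat); simpl in HM; assert (H := Cnorm_ge0 (p 0%nat)); lra).
  assert (Hq : 0 < q < 1) by (unfold q; split; [apply Rdiv_lt_0_compat|apply Rlt_div_l]; lra).
  destruct (geometric_tail_lt q M gm Hq HM0 Hgm) as [N [HN Htail]].
  assert (HNpos : 0 < INR N) by (apply lt_0_INR; lia).
  destruct (fejer_series_nonneg N m1 m2 r Hm ltac:(unfold r; lra)) as [S [HS HS0]].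
  assert (HSle := fejer_series_le N m1 m2 r r' M S HN Hm Hr HM HS).
  fold P1 P2 q in HSle. rewrite H0, Hmp in HSle.
  assert (INR N * (2 * M * (q ^ (N - 1) / (1 - q))) < INR N * gm)
    by (apply Rmult_lt_compat_l; auto).
  unfold gm in *. nra.
Qed.

End Caratheodory.

(** * The coefficient bound for [W_H^0(alpha, beta)] *)

Lemma Cconj_mul_unit (w : Cx) : Cnorm w = 1 -> Cmul (Cconj w) w = RtoC 1.
Proof. intro H. assert (H2 := Cnorm_sqr w). rewrite H in H2. apply Cx_ext; simpl; nra. Qed.

Lemma ray_series_derive (c : nat -> Cx) (f f1 : Cx -> Cx) (w : Cx) : Cnorm w = 1 ->
  (forall t, Rabs t < 1 -> ray_series c w t (f (Cmul (RtoC t) w))) ->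
  (forall z, inD z -> Cderiv f z (f1 z)) ->
  forall t, Rabs t < 1 ->
  ray_series (fun n => Cmul (RtoC (INR (S n))) (c (S n))) w t (f1 (Cmul (RtoC t) w)).
Proof.
  intros Hw Hc Hd t Ht.
  assert (H := ray_series_scal (Cconj w) _ w t _ (ray_series_derive_mul c f f1 w Hw Hc Hd t Ht)).
  assert (E := Cconj_mul_unit w Hw).
  replace (f1 (Cmul (RtoC t) w)) with (Cmul (Cconj w) (Cmul (f1 (Cmul (RtoC t) w)) w)).
  - eapply ray_series_ext; [|exact H]. intro n. cbv beta.
    replace (Cmul (Cconj w) (Cmul (RtoC (INR (S n))) (Cmul w (c (S n)))))
      with (Cmul (Cmul (Cconj w) w) (Cmul (RtoC (INR (S n))) (c (S n))))
      by (apply Cx_ext; simpl; ring).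
    rewrite E. apply Cx_ext; simpl; ring.
  - replace (Cmul (Cconj w) (Cmul (f1 (Cmul (RtoC t) w)) w))
      with (Cmul (Cmul (Cconj w) w) (f1 (Cmul (RtoC t) w))) by (apply Cx_ext; simpl; ring).
    rewrite E. apply Cx_ext; simpl; ring.
Qed.

Lemma ray_series_W_operator (c : nat -> Cx) (f f1 f2 : Cx -> Cx) (alpha : R) (w : Cx) :
  Cnorm w = 1 ->
  (forall z, inD z -> Cseries_sum (fun n => Cmul (c n) (Cpow z n)) (f z)) ->
  (forall z, inD z -> Cderiv f z (f1 z)) ->
  (forall z, inD z -> Cderiv f1 z (f2 z)) ->
  forall t, Rabs t < 1 ->
  ray_series (fun n => Cmul (RtoC (INR (S n) * (1 + alpha * INR n))) (c (S n))) w t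
    (Cadd (f1 (Cmul (RtoC t) w))
          (Cmul (RtoC alpha) (Cmul (Cmul (RtoC t) w) (f2 (Cmul (RtoC t) w))))).
Proof.
  intros Hw Hs D1 D2 t Ht.
  assert (R0 : forall s, Rabs s < 1 -> ray_series c w s (f (Cmul (RtoC s) w))).
  { intros s Hs'. apply ray_series_of_Cseries, Hs.
    unfold inD. rewrite Cnorm_mul, Cnorm_RtoC, Hw. lra. }
  assert (R1 := ray_series_derive c f f1 w Hw R0 D1).
  assert (R2 := ray_series_derive _ f1 f2 w Hw R1 D2 t Ht).
  assert (R3 := ray_series_scal (RtoC alpha) _ w t _ (ray_series_shift _ w t _ R2)).
  assert (R4 := ray_series_add _ _ w t _ _ (R1 t Ht) R3).
  replace (Cmul (RtoC alpha) (Cmul (Cmul (RtoC t) w) (f2 (Cmul (RtoC t) w))))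
    with (Cmul (RtoC alpha) (Cmul (RtoC t) (Cmul w (f2 (Cmul (RtoC t) w)))))
    by (apply Cx_ext; simpl; ring).
  eapply ray_series_ext; [|exact R4].
  intros [|n]; unfold shift_coef; [|rewrite !S_INR]; apply Cx_ext; simpl; ring.
Qed.

Lemma Cnorm_rotate_sum (A B : Cx) :
  exists e, Cnorm e = 1 /\ Cnorm (Cadd A (Cmul e B)) = Cnorm A + Cnorm B.
Proof.
  assert (Hn1 : Cnorm (RtoC 1) = 1) by (rewrite Cnorm_RtoC; apply Rabs_R1).
  assert (HA0 := Cnorm_ge0 A). assert (HB0 := Cnorm_ge0 B).
  destruct (Req_dec (Cnorm A * Cnorm B) 0) as [H0|H0].
  { exists (RtoC 1). split; [exact Hn1|].
    destruct (Rmult_integral _ _ H0) as [HA|HB].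
    - rewrite HA, (Cnorm_eq0 A HA).
      replace (Cadd (0, 0) (Cmul (RtoC 1) B)) with B by (apply Cx_ext; simpl; ring). ring.
    - rewrite HB, (Cnorm_eq0 B HB).
      replace (Cadd A (Cmul (RtoC 1) (0, 0))) with A by (apply Cx_ext; simpl; ring). ring. }
  set (na := Cnorm A) in *. set (nb := Cnorm B) in *.
  assert (Hna : 0 < na) by (destruct HA0; [auto|subst; rewrite <- H in H0; lra]).
  assert (Hnb : 0 < nb) by (destruct HB0; [auto|subst; rewrite <- H in H0; lra]).
  (* [e = A conj B / (|A| |B|)] aligns [e B] with [A] *)
  exists (Cmul (RtoC (/ (na * nb))) (Cmul A (Cconj B))). split.
  - rewrite !Cnorm_mul, Cnorm_RtoC, Cnorm_conj, Rabs_right.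
    + fold na nb. field. lra.
    + apply Rle_ge, Rlt_le, Rinv_0_lt_compat. nra.
  - assert (E : Cmul (Cconj B) B = RtoC (nb * nb))
      by (unfold nb; rewrite Cnorm_sqr; apply Cx_ext; simpl; ring).
    replace (Cadd A (Cmul (Cmul (RtoC (/ (na * nb))) (Cmul A (Cconj B))) B))
      with (Cadd A (Cmul (RtoC (/ (na * nb))) (Cmul A (Cmul (Cconj B) B))))
      by (apply Cx_ext; simpl; ring).
    rewrite E.
    replace (Cadd A (Cmul (RtoC (/ (na * nb))) (Cmul A (RtoC (nb * nb)))))
      with (Cmul (RtoC (1 + nb / na)) A) by (apply Cx_ext; simpl; field; lra).
    rewrite Cnorm_mul, Cnorm_RtoC. fold na. rewrite Rabs_right.
    + field. lra.
    + assert (0 <= nb / na) by (apply Rdiv_le_0_compat; lra). lra.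
Qed.

(* The Taylor coefficients of [(h' + alpha z h'' - beta + e (g' + alpha z g'')) / (1 - beta)]. *)
Definition W_normalized_coef (alpha beta : R) (a b : nat -> Cx) (e : Cx) (n : nat) : Cx :=
  Cmul (RtoC (/ (1 - beta)))
    (Cadd (Cadd (Cmul (RtoC (INR (S n) * (1 + alpha * INR n))) (a (S n)))
                (Cmul e (Cmul (RtoC (INR (S n) * (1 + alpha * INR n))) (b (S n)))))
          (const_coef (RtoC (- beta)) n)).

Lemma W_normalized_ray_re_nonneg (alpha beta : R) (a b : nat -> Cx) (h g : Cx -> Cx) (e : Cx) :
  beta < 1 -> in_W alpha beta a b h g -> Cnorm e = 1 ->
  forall w, Cnorm w = 1 -> forall t, 0 <= t < 1 ->
  exists X, ray_series (W_normalized_coef alpha beta a b e) w t X /\ 0 <= fst X.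
Proof.
  intros Hbe [[_ [_ [_ [_ [Hh Hg]]]]] HW] He w Hw t Ht.
  destruct HW as [h1 [h2 [g1 [g2 [Dh [Dh1 [Dg [Dg1 Hineq]]]]]]]].
  assert (Ht' : Rabs t < 1) by (rewrite Rabs_right; lra).
  set (z := Cmul (RtoC t) w).
  assert (Hz : inD z) by (unfold inD, z; rewrite Cnorm_mul, Cnorm_RtoC, Hw; lra).
  assert (RH := ray_series_W_operator a h h1 h2 alpha w Hw Hh Dh Dh1 t Ht').
  assert (RG := ray_series_W_operator b g g1 g2 alpha w Hw Hg Dg Dg1 t Ht').
  fold z in RH, RG.
  set (HH := Cadd (h1 z) (Cmul (RtoC alpha) (Cmul z (h2 z)))) in *.
  set (GG := Cadd (g1 z) (Cmul (RtoC alpha) (Cmul z (g2 z)))) in *.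
  eexists. split.
  - exact (ray_series_scal (RtoC (/ (1 - beta))) _ w t _
      (ray_series_add _ _ w t _ _ (ray_series_add _ _ w t _ _ RH (ray_series_scal e _ w t _ RG))
                                   (ray_series_const (RtoC (- beta)) w t))).
  - assert (Hi := Hineq z Hz). fold HH GG in Hi. unfold Cre in Hi.
    assert (H1 := fst_ge_neg_Cnorm (Cmul e GG)). rewrite Cnorm_mul, He in H1.
    assert (0 < / (1 - beta)) by (apply Rinv_0_lt_compat; lra).
    assert (0 <= fst HH + fst (Cmul e GG) + - beta) by lra.
    set (EG := Cmul e GG) in *. clearbody HH EG. simpl. nra.
Qed.

Lemma W_coef2_bound (alpha beta : R) (a b : nat -> Cx) (h g : Cx -> Cx) :
  0 <= alpha -> 0 <= beta < 1 -> in_W alpha beta a b h g ->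
  (1 + alpha) * (Cnorm (a 2%nat) + Cnorm (b 2%nat)) <= 1 - beta.
Proof.
  intros Hal Hbe HW. pose proof HW as [[_ [Ha1 [_ [Hb1 _]]]] _].
  destruct (Cnorm_rotate_sum (a 2%nat) (b 2%nat)) as [e [He Heq]].
  set (p := W_normalized_coef alpha beta a b e).
  assert (Hp0 : fst (p 0%nat) = 1).
  { unfold p, W_normalized_coef, const_coef. rewrite Ha1, Hb1. simpl. field. lra. }
  assert (Hp1 : p 1%nat =
    Cmul (RtoC (2 * (1 + alpha) / (1 - beta))) (Cadd (a 2%nat) (Cmul e (b 2%nat)))).
  { unfold p, W_normalized_coef, const_coef. simpl INR. apply Cx_ext; simpl; field; lra. }
  assert (Hn := caratheodory_coef1 p
    (W_normalized_ray_re_nonneg alpha beta a b h g e ltac:(lra) HW He) Hp0).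
  rewrite Hp1, Cnorm_mul, Cnorm_RtoC, Rabs_right in Hn
    by (apply Rle_ge, Rdiv_le_0_compat; lra).
  rewrite <- Heq. apply (Rmult_le_reg_l (2 / (1 - beta))); [apply Rdiv_lt_0_compat; lra|].
  replace (2 / (1 - beta) * (1 - beta)) with 2 by (field; lra).
  replace (2 / (1 - beta) * ((1 + alpha) * Cnorm (Cadd (a 2%nat) (Cmul e (b 2%nat)))))
    with (2 * (1 + alpha) / (1 - beta) * Cnorm (Cadd (a 2%nat) (Cmul e (b 2%nat))))
    by (field; lra).
  exact Hn.
Qed.

Theorem theorem5p3 (alpha beta : R) (a b : nat -> Cx) (h g : Cx -> Cx) :
  0 <= alpha -> 0 <= beta < 1 ->
  in_W alpha beta a b h g ->
  convex_in_disk (s22 a b) ((1 + alpha) / (4 * (1 - beta))).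
Proof.
  intros Hal Hbe HW.
  assert (Hcoef := W_coef2_bound alpha beta a b h g Hal Hbe HW).
  apply (quad_map_convex (a 2%nat) (b 2%nat)).
  - apply Rdiv_lt_0_compat; lra.
  - replace (4 * ((1 + alpha) / (4 * (1 - beta))) * (Cnorm (a 2%nat) + Cnorm (b 2%nat)))
      with ((1 + alpha) * (Cnorm (a 2%nat) + Cnorm (b 2%nat)) / (1 - beta)) by (field; lra).
    apply Rle_div_l; lra.
Qed.
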